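(* Let $z\ge0$ be an integer. If an undirected multigraph $G$ has a $z$-antler $(C_1,F_1)$ and an antler $(C_2,F_2)$, then $(C_1\setminus(C_2\cup F_2),\,F_1\setminus(C_2\cup F_2))$ is a $z$-antler in $G-(C_2\cup F_2)$.
   Context: A feedback vertex set (FVS) of $G$ is a set $X\subseteq V(G)$ with $G-X$ acyclic (self-loops and pairs of parallel edges count as cycles); $\mathrm{fvs}(G)$ is its minimum size. For disjoint $X,Y$, $e(X,Y)$ is the number of edges between $X$ and $Y$. A feedback vertex cut (FVC) in $G$ is a pair of disjoint sets $C,F\subseteq V(G)$ such that $G[F]$ is a forest and every tree $T$ of $G[F]$ satisfies $e(V(T),V(G)\setminus(C\cup F))\le1$. An antler is a FVC $(C,F)$ with $|C|\le\mathrm{fvs}(G[C\cup F])$. For $C\subseteq V(G)$, a $C$-certificate is a subgraph $H$ of $G$ such that $C$ is a minimum FVS of $H$; it has order $z$ if every component $H'$ of $H$ satisfies $\mathrm{fvs}(H')=|C\cap V(H')|\le z$. A $z$-antler is an antler $(C,F)$ such that $G[C\cup F]$ contains a $C$-certificate of order $z$. *)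

(* Finite undirected multigraphs (loops and parallel edges
   allowed) over an ambient vertex type V and edge type E; each edge e has an
   (unordered) pair of endpoints given by ends e : V * V. *)
From Stdlib Require Import ClassicalEpsilon.
From mathcomp Require Import all_boot.
Set Implicit Arguments. Unset Strict Implicit. Unset Printing Implicit Defensive.

Definition asb (P : Prop) : bool :=
  if excluded_middle_informative P then true else false.

Section Multigraph.
Variables (V E : finType) (ends : E -> V * V).

Definition graph := ({set V} * {set E})%type.

Definition incident (e : E) (u v : V) : bool :=
  (ends e == (u, v)) || (ends e == (v, u)).

Definition wf_graph (H : graph) : Prop :=
  forall e, e \in H.2 -> (ends e).1 \in H.1 /\ (ends e).2 \in H.1.

Definition subgraph (H G : graph) : Prop :=
  wf_graph H /\ H.1 \subset G.1 /\ H.2 \subset G.2.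

Definition induced (G : graph) (X : {set V}) : graph :=
  (X :&: G.1, [set e in G.2 | ((ends e).1 \in X) && ((ends e).2 \in X)]).

Definition del (G : graph) (X : {set V}) : graph := induced G (G.1 :\: X).

(* a cycle: distinct vertices v_0..v_k and distinct edges e_0..e_k with e_i
   joining v_i and v_(i+1 mod k+1); k = 0 is a self-loop, k = 1 a pair of
   parallel edges *)
Definition has_cycle (H : graph) : Prop :=
  exists k (vs : 'I_k.+1 -> V) (es : 'I_k.+1 -> E),
    injective vs /\ injective es /\
    forall i, [/\ vs i \in H.1, es i \in H.2 & incident (es i) (vs i) (vs (ordS i))].

Definition acyclic (H : graph) : Prop := ~ has_cycle H.

Definition is_fvs (H : graph) (X : {set V}) : Prop :=
  X \subset H.1 /\ acyclic (del H X).

(* fvs(H): minimum size of a feedback vertex set (H.1 itself always is one) *)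
Definition fvs (H : graph) : nat :=
  \big[minn/#|H.1|]_(X : {set V} | asb (is_fvs H X)) #|X|.

Definition ecount (G : graph) (X Y : {set V}) : nat :=
  #|[set e in G.2 | (((ends e).1 \in X) && ((ends e).2 \in Y)) ||
                    (((ends e).1 \in Y) && ((ends e).2 \in X))]|.

Definition adj (H : graph) : rel V :=
  fun u v => [exists e in H.2, incident e u v].

Definition comp_vertices (H : graph) (v : V) : {set V} :=
  [set u in H.1 | connect (adj H) v u].

Definition component (H : graph) (v : V) : graph := induced H (comp_vertices H v).

Definition fvc (G : graph) (C F : {set V}) : Prop :=
  [/\ C \subset G.1, F \subset G.1, [disjoint C & F],
      acyclic (induced G F) &
      forall v, v \in F ->
        ecount G (comp_vertices (induced G F) v) (G.1 :\: (C :|: F)) <= 1].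

Definition antler (G : graph) (C F : {set V}) : Prop :=
  fvc G C F /\ #|C| <= fvs (induced G (C :|: F)).

Definition certificate (G : graph) (C : {set V}) (H : graph) : Prop :=
  subgraph H G /\ is_fvs H C /\ #|C| = fvs H.

Definition certificate_of_order (G : graph) (C : {set V}) (z : nat) (H : graph) : Prop :=
  certificate G C H /\
  forall v, v \in H.1 ->
    fvs (component H v) = #|C :&: (component H v).1| /\
    #|C :&: (component H v).1| <= z.

Definition z_antler (G : graph) (z : nat) (C F : {set V}) : Prop :=
  antler G C F /\ exists H, certificate_of_order (induced G (C :|: F)) C z H.

End Multigraph.

(* A cycle that avoids C cannot meet F when (C, F) is a feedback vertex cut:
   it would leave the tree of G[F] it meets along two distinct edges, both
   ending outside C ∪ F.  Let W = C2 ∪ F2 and let H be a C1-certificate of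
   order z.  For a minimum FVS S of H - W, the set S ∪ (C2 ∩ V(H)) is an FVS
   of H, and (C1 ∩ W) ∪ (C2 \ (C1 ∪ F1)) is an FVS of G[W].  Comparing with
   |C1| = fvs H and |C2| <= fvs G[W] gives |C1 \ W| <= fvs (H - W), so H - W
   is a (C1 \ W)-certificate.  Its order stays at most z: a minimum FVS meets
   every component in a minimum FVS of that component, and the components of
   H - W lie inside those of H. *)

From Stdlib Require Import ClassicalEpsilon.
From mathcomp Require Import all_boot zify.
Set Implicit Arguments. Unset Strict Implicit. Unset Printing Implicit Defensive.

Lemma val_iter_ordS k (i : 'I_k.+1) n : val (iter n (@ordS _) i) = (i + n) %% k.+1.
Proof.
elim: n => [|n IHn] /=; first by rewrite addn0 modn_small.
by rewrite IHn /= -addn1 modnDml -addnA addn1.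
Qed.

Lemma ordS_ind k (P : pred 'I_k.+1) i0 :
  (forall i, P i -> P (ordS i)) -> P i0 -> forall j, P j.
Proof.
move=> PS Pi0 j.
have Piter n : P (iter n (@ordS _) i0) by elim: n => //= n; apply: PS.
suff -> : j = iter (k.+1 - i0 + j) (@ordS _) i0 by [].
apply: val_inj; rewrite val_iter_ordS addnA subnKC ?(ltnW (ltn_ord i0)) //.
by rewrite addnC modnDr modn_small.
Qed.

Lemma ordS_exit k (P : pred 'I_k.+1) i0 j0 :
  P i0 -> ~~ P j0 -> exists i, P i && ~~ P (ordS i).
Proof.
move=> Pi0 nPj0; case: (pickP [pred i | P i && ~~ P (ordS i)]) => [i Pi | noexit].
  by exists i.
suff : P j0 by rewrite (negbTE nPj0).
apply: (ordS_ind _ Pi0) => i Pi; apply: contraFT (noexit i) => nPSi.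
by rewrite /= Pi.
Qed.

Section FeedbackVertexCuts.
Variables (V E : finType) (ends : E -> V * V).

Local Notation graph := (graph V E).
Local Notation incident := (incident ends).
Local Notation induced := (induced ends).
Local Notation del := (del ends).
Local Notation has_cycle := (has_cycle ends).
Local Notation acyclic := (acyclic ends).
Local Notation is_fvs := (is_fvs ends).
Local Notation fvs := (fvs ends).
Local Notation ecount := (ecount ends).
Local Notation adj := (adj ends).
Local Notation comp_vertices := (comp_vertices ends).
Local Notation component := (component ends).
Local Notation fvc := (fvc ends).
Local Notation certificate := (certificate ends).
Local Notation certificate_of_order := (certificate_of_order ends).

Implicit Types (G H J M : graph) (A C D F W X Y : {set V}).

Definition sub_graph H M := (H.1 \subset M.1) && (H.2 \subset M.2).

Lemma sub_graph_trans H J M : sub_graph H J -> sub_graph J M -> sub_graph H M.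
Proof.
case/andP=> sHJ1 sHJ2 /andP [sJM1 sJM2].
by rewrite /sub_graph (subset_trans sHJ1) ?(subset_trans sHJ2).
Qed.

Lemma subgraphP H M : subgraph ends H M <-> wf_graph ends H /\ sub_graph H M.
Proof.
by split=> [[wfH [sHM1 sHM2]] | [wfH /andP]]; last split; rewrite /sub_graph ?sHM1.
Qed.

Lemma wf_induced H X : wf_graph ends H -> wf_graph ends (induced H X).
Proof.
move=> wfH e; rewrite !inE => /and3P [eH e1X e2X].
by case: (wfH e eH) => -> ->; rewrite e1X e2X.
Qed.

Lemma induced_sub H X : sub_graph (induced H X) H.
Proof.
by apply/andP; split; apply/subsetP => x; rewrite !inE => /andP [].
Qed.

Lemma del_sub H X : sub_graph (del H X) H.
Proof. exact: induced_sub. Qed.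

Lemma inducedS H M X Y :
  sub_graph H M -> X \subset Y -> sub_graph (induced H X) (induced M Y).
Proof.
case/andP=> /subsetP sHM1 /subsetP sHM2 /subsetP sXY.
apply/andP; split; apply/subsetP => x; rewrite !inE.
  by case/andP=> /sXY -> /sHM1 ->.
by case/and3P=> /sHM2 -> /sXY -> /sXY ->.
Qed.

Lemma incident_sym e x y : incident e x y -> incident e y x.
Proof. by rewrite /incident orbC. Qed.

Lemma incident_induced H X e x y :
  e \in H.2 -> incident e x y -> x \in X -> y \in X -> e \in (induced H X).2.
Proof. by rewrite inE => -> /orP [] /eqP -> /= -> ->. Qed.

Definition cycle_in H k (vs : 'I_k.+1 -> V) (es : 'I_k.+1 -> E) :=
  injective vs /\ injective es /\
  forall i, [/\ vs i \in H.1, es i \in H.2 & incident (es i) (vs i) (vs (ordS i))].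

Lemma has_cycleP H : has_cycle H <-> exists k vs es, @cycle_in H k vs es.
Proof. by []. Qed.

Lemma cycle_inS H M k vs es :
  sub_graph H M -> @cycle_in H k vs es -> cycle_in M vs es.
Proof.
case/andP=> /subsetP sHM1 /subsetP sHM2 [vs_inj [es_inj cyc]].
by split=> //; split=> // i; case: (cyc i) => /sHM1 ? /sHM2 ?.
Qed.

Lemma acyclicS H M : sub_graph H M -> acyclic M -> acyclic H.
Proof.
move=> sHM acM /has_cycleP [k [vs [es /(cycle_inS sHM) cyc]]].
by apply: acM; exists k, vs, es.
Qed.

Lemma cycle_in_induced H X k vs es :
  @cycle_in (induced H X) k vs es <-> cycle_in H vs es /\ forall i, vs i \in X.
Proof.
split=> [[vs_inj [es_inj cyc]] | [[vs_inj [es_inj cyc]] inX]].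
  split=> [|i]; last by case: (cyc i); rewrite inE => /andP [].
  split=> //; split=> // i; case: (cyc i); rewrite !inE.
  by case/andP=> _ -> /and3P [-> _ _].
split=> //; split=> // i; case: (cyc i) => vsH esH inc.
split=> //; first by rewrite inE vsH inX.
exact: incident_induced esH inc (inX _) (inX _).
Qed.

Lemma cycle_in_del H X k vs es :
  @cycle_in (del H X) k vs es <-> cycle_in H vs es /\ forall i, vs i \notin X.
Proof.
rewrite cycle_in_induced; split=> -[cyc inHX]; split=> // i; move: (inHX i).
  by rewrite inE => /andP [].
by case: cyc => _ [_ /(_ i) [vsH _ _]]; rewrite inE vsH andbT.
Qed.

Lemma adj_connect H e x y : e \in H.2 -> incident e x y -> connect (adj H) x y.
Proof. by move=> eH inc; apply: connect1; apply/existsP; exists e; rewrite eH. Qed.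

Lemma comp_verticesS H M v :
  sub_graph H M -> comp_vertices H v \subset comp_vertices M v.
Proof.
case/andP=> /subsetP sHM1 /subsetP sHM2; apply/subsetP => x; rewrite !inE.
case/andP=> /sHM1 -> /=; apply: connect_sub => y w /existsP [e /andP [eH inc]].
exact: adj_connect (sHM2 _ eH) inc.
Qed.

Lemma componentS H M v : sub_graph H M -> sub_graph (component H v) (component M v).
Proof. by move=> sHM; apply: inducedS (comp_verticesS v sHM). Qed.

Lemma cycle_in_comp_vertices H v k vs es i0 :
  @cycle_in H k vs es -> vs i0 \in comp_vertices H v ->
  forall i, vs i \in comp_vertices H v.
Proof.
case=> _ [_ cyc]; apply: ordS_ind => i; rewrite !inE => /andP [_ conn_vi].
case: (cyc i) (cyc (ordS i)) => _ esH inc [-> _ _] /=.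
exact: connect_trans conn_vi (adj_connect esH inc).
Qed.

Definition edges_between G X Y : {set E} :=
  [set e in G.2 | (((ends e).1 \in X) && ((ends e).2 \in Y)) ||
                  (((ends e).1 \in Y) && ((ends e).2 \in X))].

Lemma ecountE G X Y : ecount G X Y = #|edges_between G X Y|.
Proof. by []. Qed.

Lemma incident_edges_between G X Y e x y :
  e \in G.2 -> incident e x y -> x \in X -> y \in Y -> e \in edges_between G X Y.
Proof. by rewrite inE => -> /orP [] /eqP -> /= -> ->; rewrite ?orbT. Qed.

Lemma leq_ecount G M X1 X2 Y1 Y2 : sub_graph G M -> X1 \subset X2 -> Y1 \subset Y2 ->
  ecount G X1 Y1 <= ecount M X2 Y2.
Proof.
case/andP=> _ /subsetP sGM2 /subsetP sX /subsetP sY; apply: subset_leq_card.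
apply/subsetP => e; rewrite !inE => /andP [/sGM2 -> /=].
case/orP=> /andP [h1 h2]; first by rewrite (sX _ h1) (sY _ h2).
by rewrite (sX _ h2) (sY _ h1) orbT.
Qed.

Lemma fvs_min H X : is_fvs H X -> fvs H <= #|X|.
Proof.
move=> fvsX; have asbX : asb (is_fvs H X).
  by rewrite /asb; case: excluded_middle_informative.
rewrite /fvs; elim: (index_enum _) (mem_index_enum X) => // Y r IHr.
rewrite inE big_cons => /predU1P [<- | Xr]; first by rewrite asbX geq_minl.
by case: ifP => _; rewrite ?geq_min (IHr Xr) ?orbT.
Qed.

Lemma fvs_witness H : exists2 X, is_fvs H X & #|X| = fvs H.
Proof.
rewrite /fvs; apply: (big_ind (fun n => exists2 X, is_fvs H X & #|X| = n)).
- exists H.1 => //; split=> // /has_cycleP [k [vs [es /cycle_in_del [cyc]]]].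
  by case: cyc => _ [_ /(_ ord0) [vsH _ _]] /(_ ord0); rewrite vsH.
- move=> _ _ [X fvsX <-] [Y fvsY <-].
  by rewrite /minn; case: ltnP => _; [exists X | exists Y].
- by move=> X; rewrite /asb; case: excluded_middle_informative => // fvsX _; exists X.
Qed.

Lemma is_fvsS H M Y : sub_graph H M -> is_fvs M Y -> is_fvs H (Y :&: H.1).
Proof.
move=> sHM [_ acY]; split; first exact: subsetIr.
move=> /has_cycleP [k [vs [es /cycle_in_del [cyc notYH]]]].
apply: acY; apply/has_cycleP; exists k, vs, es; apply/cycle_in_del.
split=> [|i]; first exact: cycle_inS cyc.
by case: cyc => _ [_ /(_ i) [vsH _ _]]; move: (notYH i); rewrite inE vsH andbT.
Qed.

Lemma fvsS H M : sub_graph H M -> fvs H <= fvs M.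
Proof.
move=> sHM; have [Y fvsY <-] := fvs_witness M.
exact: leq_trans (fvs_min (is_fvsS sHM fvsY)) (subset_leq_card (subsetIl _ _)).
Qed.

Lemma certificate_card_le G C H : certificate G C H -> #|C| <= fvs G.
Proof. by case=> /subgraphP [_ sHG] [_ ->]; apply: fvsS. Qed.

Lemma fvs_component_ge J D v : is_fvs J D -> #|D| <= fvs J ->
  #|D :&: (component J v).1| <= fvs (component J v).
Proof.
move=> [sDJ acD] minD; have [Y [sYK acY] cardY] := fvs_witness (component J v).
set K1 := (component J v).1.
have fvsZ : is_fvs J (Y :|: (D :\: K1)).
  rewrite /is_fvs subUset (subset_trans sYK) ?(subset_trans (subsetDl _ _)) //;
    last exact: (andP (induced_sub _ _)).1.
  split=> // /has_cycleP [k [vs [es /cycle_in_del [cyc notZ]]]].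
  case: (pickP [pred i | vs i \in comp_vertices J v]) => [i0 inK | outK].
    apply: acY; apply/has_cycleP; exists k, vs, es; apply/cycle_in_del; split.
      by apply/cycle_in_induced; split; last exact: cycle_in_comp_vertices cyc inK.
    by move=> i; move: (notZ i); rewrite inE negb_or => /andP [].
  apply: acD; apply/has_cycleP; exists k, vs, es.
  apply/cycle_in_del; split=> [|i]; first exact: cyc.
  have notK1 : vs i \notin K1 by rewrite in_setI [_ \in comp_vertices J v]outK.
  by move: (notZ i); rewrite in_setU in_setD notK1 => /norP [].
have := fvs_min fvsZ; have := cardsUI Y (D :\: K1); have := cardsID K1 D.
lia.
Qed.

Lemma edge_leaving_component G C F u e x y :
  e \in G.2 -> incident e x y -> x \in comp_vertices (induced G F) u ->
  y \notin comp_vertices (induced G F) u -> y \in G.1 -> y \notin C ->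
  e \in edges_between G (comp_vertices (induced G F) u) (G.1 :\: (C :|: F)).
Proof.
move=> eG inc Tx nTy yG nCy; apply: (incident_edges_between eG inc Tx).
rewrite !inE (negbTE nCy) yG andbT /=; apply: contra nTy => Fy.
move: Tx; rewrite !inE => /andP [/andP [Fx _] conn].
by rewrite Fy yG (connect_trans conn) // (adj_connect _ inc) ?(incident_induced eG inc).
Qed.

Lemma fvc_cycle_avoid G C F k vs es :
  fvc G C F -> @cycle_in G k vs es -> (forall i, vs i \notin C) ->
  forall i, vs i \notin F.
Proof.
case=> _ _ _ acF cutF cyc notC i0; apply/negP => Fi0.
set T := comp_vertices (induced G F) (vs i0).
have Ti0 : vs i0 \in T by rewrite !inE Fi0 connect0 andbT; case: cyc => _ [_ /(_ i0) []].
have [j0 nTj0] : exists j, vs j \notin T.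
  case: (pickP [pred j | vs j \notin T]) => [j | inT]; first by exists j.
  case: acF; apply/has_cycleP; exists k, vs, es.
  apply/cycle_in_induced; split=> [|i]; first exact: cyc.
  by move/negbFE: (inT i); rewrite !inE => /andP [/andP []].
have nnTi0 : ~~ (vs i0 \notin T) by rewrite negbK.
have [i /andP [Ti nTSi]] := ordS_exit (P := [pred j | vs j \in T]) Ti0 nTj0.
have [j /andP [nTj /negbNE TSj]] := ordS_exit (P := [pred j | vs j \notin T]) nTj0 nnTi0.
case: cyc => _ [es_inj cyc].
have [[_ esi inci] [vsSi _ _]] := (cyc i, cyc (ordS i)).
have [vsj esj incj] := cyc j.
have neq : es i != es j by apply: contraTneq Ti => /es_inj ->.
have ei := edge_leaving_component esi inci Ti nTSi vsSi (notC _).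
have ej := edge_leaving_component esj (incident_sym incj) TSj nTj vsj (notC _).
move: (cutF _ Fi0); rewrite ecountE -/T; apply/negP; rewrite -ltnNge.
apply: leq_trans (subset_leq_card (_ : [set es i; es j] \subset _)).
  by rewrite cards2 neq.
by apply/subsetP => e /set2P [] ->.
Qed.

Lemma fvc_del G C F W : fvc G C F -> fvc (del G W) (C :\: W) (F :\: W).
Proof.
case=> /subsetP sCG /subsetP sFG dCF acF cutF; split.
- by apply/subsetP => x; rewrite !inE => /andP [-> /sCG ->].
- by apply/subsetP => x; rewrite !inE => /andP [-> /sFG ->].
- exact: disjointWl (subsetDl C W) (disjointWr (subsetDl F W) dCF).
- exact: acyclicS (inducedS (del_sub G W) (subsetDl F W)) acF.
move=> v; rewrite inE => /andP [_ Fv]; apply: leq_trans (cutF v Fv).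
apply: leq_ecount (del_sub G W) _ _.
  exact/comp_verticesS/inducedS/subsetDl/del_sub.
by apply/subsetP => x; rewrite !inE; case: (x \in W) => //= /and3P [-> ->].
Qed.

Lemma fvs_le_del_fvc G H C F : sub_graph H G -> fvc G C F ->
  fvs H <= fvs (del H (C :|: F)) + #|C :&: H.1|.
Proof.
move=> sHG cutCF; have [S [sS acS] <-] := fvs_witness (del H (C :|: F)).
have fvsSC : is_fvs H (S :|: (C :&: H.1)).
  split; first by rewrite subUset subsetIr (subset_trans sS) ?(andP (del_sub _ _)).1.
  move=> /has_cycleP [k [vs [es /cycle_in_del [cyc notSC]]]].
  have [notS notC] : (forall i, vs i \notin S) /\ (forall i, vs i \notin C).
    split=> i; move: (notSC i); case: cyc => _ [_ /(_ i) [vsH _ _]];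
      by rewrite !inE vsH andbT => /norP [].
  have notF := fvc_cycle_avoid cutCF (cycle_inS sHG cyc) notC.
  apply: acS; apply/has_cycleP; exists k, vs, es.
  apply/cycle_in_del; split=> [|//]; apply/cycle_in_del; split=> [|i]; first exact: cyc.
  by rewrite inE negb_or notC notF.
by apply: leq_trans (fvs_min fvsSC) _; rewrite cardsU leq_subr.
Qed.

Lemma is_fvs_induced_fvc G C1 F1 C2 F2 : fvc G C1 F1 -> fvc G C2 F2 ->
  is_fvs (induced G (C2 :|: F2)) ((C1 :&: (C2 :|: F2)) :|: (C2 :\: (C1 :|: F1))).
Proof.
move=> cut1 cut2; have [/subsetP sC2G /subsetP sF2G _ _ _] := cut2; split.
  apply/subsetP => x; rewrite !inE => /orP [/andP [_ W2x] | /andP [_ C2x]].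
    by rewrite W2x; case/orP: W2x => [/sC2G | /sF2G].
  by rewrite C2x sC2G.
move=> /has_cycleP [k [vs [es /cycle_in_del [/cycle_in_induced [cyc inW] notX]]]].
have notC1 i : vs i \notin C1.
  by move: (notX i); rewrite in_setU in_setI (inW i) andbT => /norP [].
have notF1 := fvc_cycle_avoid cut1 cyc notC1.
have notC2 i : vs i \notin C2.
  by move: (notX i); rewrite !inE (negbTE (notC1 i)) (negbTE (notF1 i)).
have notF2 := fvc_cycle_avoid cut2 cyc notC2.
by move: (inW ord0); rewrite inE (negbTE (notC2 _)) (negbTE (notF2 _)).
Qed.

Lemma card_del_le_fvs G H C1 F1 C2 F2 :
  fvc G C1 F1 -> certificate (induced G (C1 :|: F1)) C1 H -> antler ends G C2 F2 ->
  #|C1 :\: (C2 :|: F2)| <= fvs (del H (C2 :|: F2)).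
Proof.
move=> cut1 [/subgraphP [_ sHG1] [_ cardC1]] [cut2 cardC2].
have sHC1F1 : H.1 \subset C1 :|: F1 := subset_trans (andP sHG1).1 (subsetIl _ _).
have := fvs_le_del_fvc (sub_graph_trans sHG1 (induced_sub _ _)) cut2.
have := fvs_min (is_fvs_induced_fvc cut1 cut2).
have := subset_leq_card (setIS C2 sHC1F1).
have := cardsUI (C1 :&: (C2 :|: F2)) (C2 :\: (C1 :|: F1)).
have := cardsID (C1 :|: F1) C2; have := cardsID (C2 :|: F2) C1.
lia.
Qed.

Lemma del_induced_sub G H A W : sub_graph H (induced G A) ->
  sub_graph (del H W) (induced (del G W) (A :\: W)).
Proof.
case/andP=> /subsetP sH1 /subsetP sH2.
have inAG x : x \in H.1 -> (x \in A) && (x \in G.1) by move/sH1; rewrite inE.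
apply/andP; split; apply/subsetP => x; rewrite !inE.
  by case/andP=> /andP [-> /inAG /andP [-> ->]].
case/and3P=> /sH2; rewrite inE => /and3P [-> _ _].
by case/andP=> -> /inAG /andP [-> ->] /andP [-> /inAG /andP [-> ->]].
Qed.

Lemma certificate_del G H C F W :
  #|C :\: W| <= fvs (del H W) -> certificate (induced G (C :|: F)) C H ->
  certificate (induced (del G W) ((C :\: W) :|: (F :\: W))) (C :\: W) (del H W).
Proof.
move=> cardCW [/subgraphP [wfH sHG] [[/subsetP sCH acH] _]].
have fvsCW : is_fvs (del H W) (C :\: W).
  split; first by apply/subsetP => x; rewrite !inE => /andP [-> /sCH ->].
  move=> /has_cycleP [k [vs [es /cycle_in_del [/cycle_in_del [cyc notW] notCW]]]].
  apply: acH; apply/has_cycleP; exists k, vs, es; apply/cycle_in_del.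
  split=> [|i]; first exact: cyc.
  by move: (notCW i); rewrite inE (notW i).
split; last by split=> //; apply/eqP; rewrite eqn_leq cardCW fvs_min.
by apply/subgraphP; split; [exact: wf_induced | rewrite -setDUl; exact: del_induced_sub].
Qed.

Lemma certificate_of_order_del G H C F W z :
  #|C :\: W| <= fvs (del H W) ->
  certificate_of_order (induced G (C :|: F)) C z H ->
  certificate_of_order (induced (del G W) ((C :\: W) :|: (F :\: W))) (C :\: W) z
    (del H W).
Proof.
move=> cardCW [certH orderH].
have certH' := certificate_del cardCW certH; have [_ [fvsCW cardCW']] := certH'.
split=> [|v]; first exact: certH'.
rewrite !inE => /andP [_ Hv].
split.
  apply/eqP; rewrite eqn_leq fvs_component_ge ?cardCW' // andbT.
  exact: fvs_min (is_fvsS (induced_sub _ _) fvsCW).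
apply: leq_trans (orderH v Hv).2; apply/subset_leq_card/setISS; first exact: subsetDl.
exact: (andP (componentS v (del_sub H W))).1.
Qed.

End FeedbackVertexCuts.

Theorem lemma10 (V E : finType) (ends : E -> V * V) (z : nat)
    (C1 F1 C2 F2 : {set V}) :
  let G : graph V E := (setT, setT) in
  z_antler ends G z C1 F1 ->
  antler ends G C2 F2 ->
  z_antler ends (del ends G (C2 :|: F2)) z
    (C1 :\: (C2 :|: F2)) (F1 :\: (C2 :|: F2)).
Proof.
move=> G [[cut1 _] [H orderH]] antler2.
have orderH' := certificate_of_order_del (card_del_le_fvs cut1 orderH.1 antler2) orderH.
split; last by exists (del ends H (C2 :|: F2)).
split; first exact: fvc_del.
exact: certificate_card_le orderH'.1.
Qed.
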